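(* There is an absolute constant $c>0$ such that the following holds. Let $k\ge1$, let $V$ be the vertex set of $Dec_kC$, and let $\emptyset\ne S\subseteq V$. Put $\sigma=|S|/|V|$ and $\sigma_i=|S\cap l_i|/|l_i|$ for $1\le i\le k+1$. If there exists $i$ with $|\sigma-\sigma_i|\ge\sigma/10$, then $$|E(S,V\setminus S)|\ge c\cdot 6\cdot|S|\cdot\left(\frac47\right)^k.$$
   Context: Let $D$ be the bipartite graph with product vertices $m_1,\dots,m_7$, output vertices $c_1,c_2,c_3,c_4$, and edges $c_1m_1,c_1m_4,c_1m_5,c_1m_7$, $c_2m_3,c_2m_5$, $c_3m_2,c_3m_4$, $c_4m_1,c_4m_2,c_4m_3,c_4m_6$. These encode Strassen's formulas for $C_{11},C_{12},C_{21},C_{22}$ in terms of $M_1,\dots,M_7$. For $k\ge1$, $Dec_kC$ is the undirected graph on the disjoint union of levels $l_1,\dots,l_{k+1}$. Level $l_i$ is the set of words $w_1\cdots w_k$ with $w_1,\dots,w_{k-i+1}\in\{1,2,3,4\}$ and $w_{k-i+2},\dots,w_k\in\{1,\dots,7\}$, so $|l_i|=4^{k-i+1}7^{i-1}$. For $u\in l_i$, $v\in l_{i+1}$ ($1\le i\le k$) and $p=k-i+1$, the pair $uv$ is an edge iff $u_t=v_t$ for all $t\neq p$ and $c_{u_p}m_{v_p}$ is an edge of $D$. There are no other edges. Maximum degree is $6$. $E(A,B)$ denotes the set of edges with one endpoint in $A$ and the other in $B$. *)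

From HB Require Import structures.
From mathcomp Require Import all_boot all_order all_algebra.
Set Implicit Arguments. Unset Strict Implicit. Unset Printing Implicit Defensive.
Import Order.TTheory GRing.Theory Num.Theory.

(* Conventions (0-indexed):
   product vertex m_{b+1} is b : 'I_7, output vertex c_{a+1} is a (a < 4).
   Level l_{i0+1} is indexed by i0 : 'I_(k.+1).
   Word position t (1-indexed) is t-1 : 'I_k. *)

(* Edges c_{a+1} m_{b+1} of the Strassen bipartite graph D. *)
Definition Dedge (a b : nat) : bool :=
  match a with
  | 0 => b \in [:: 0; 3; 4; 6]
  | 1 => b \in [:: 2; 4]
  | 2 => b \in [:: 1; 3]
  | 3 => b \in [:: 0; 1; 2; 5]
  | _ => false
  end%N.

(* Ambient type: (level index i0, word w). *)
Definition DecT (k : nat) : finType := ('I_k.+1 * {ffun 'I_k -> 'I_7})%type.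

(* (i0, w) is a vertex of level l_{i0+1}: positions t0 < k - i0 (i.e. 1-indexed
   positions 1..k-i+1) have letters in {1..4}, the rest in {1..7}. *)
Definition validV k (v : DecT k) : bool :=
  [forall t : 'I_k, (t < k - v.1)%N ==> (v.2 t < 4)%N].

Definition Vset k : {set DecT k} := [set v | validV v].

Definition level k (i : 'I_k.+1) : {set DecT k} :=
  [set v | validV v && (v.1 == i)].

(* Directed edge from u in l_i to v in l_{i+1}, with p = k-i+1 (1-indexed),
   i.e. p0 = k - i0 - 1 (0-indexed). *)
Definition upEdge k (u v : DecT k) : bool :=
  [&& validV u, validV v, (v.1 == u.1.+1 :> nat),
      [forall t : 'I_k, (t != k - u.1 - 1 :> nat) ==> (u.2 t == v.2 t)] &
      [exists t : 'I_k, (t == k - u.1 - 1 :> nat) && Dedge (u.2 t) (v.2 t)]].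

Definition adj k (u v : DecT k) : bool := upEdge u v || upEdge v u.

(* |E(A,B)|: number of edges with one endpoint in A and the other in B
   (A, B disjoint in our use, so ordered pairs count each edge once). *)
Definition cutE k (A B : {set DecT k}) : nat :=
  #|[set p : DecT k * DecT k | [&& p.1 \in A, p.2 \in B & adj p.1 p.2]]|.

From HB Require Import structures.
From mathcomp Require Import all_boot all_order all_algebra.
From mathcomp Require Import zify ring lra.
Import Order.TTheory GRing.Theory Num.Theory.
Set Implicit Arguments. Unset Strict Implicit. Unset Printing Implicit Defensive.

(* The edges between two consecutive levels l_t and l_{t+1} split into
   disjoint copies of the bipartite graph D: a copy is fixed by a "context"
   word g, and consists of the 4 words obtained by writing a letter a < 4 at
   the switched position p of g (level l_t) and the 7 words obtained by
   writing any letter b there (level l_{t+1}).  Since D is connected, a copy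
   that contains no edge of the cut E(S, V \ S) lies entirely inside or
   entirely outside S, and then 7 |S ∩ copy ∩ l_t| = 4 |S ∩ copy ∩ l_{t+1}|;
   every other ("mixed") copy contributes a cut edge, and distinct copies
   contribute distinct edges.  Summing over copies gives, with x_t = |S ∩ l_t|
   and M_t the number of mixed copies of layer t,
       |7 x_t - 4 x_{t+1}| <= 28 M_t,    sum_t M_t <= |E(S, V \ S)|,
   while |l_{t+1}| = 7/4 |l_t|.  A purely analytic argument then turns these
   relations into the bound: the densities x_t / |l_t| vary by at most
   4 M_t / |l_0| per layer, sigma is their weighted average, and
   |V| <= 7/3 |l_0| (7/4)^k. *)

Lemma validP k (i : 'I_k.+1) (w : {ffun 'I_k -> 'I_7}) :
  reflect (forall s : 'I_k, (s < k - i)%N -> (w s < 4)%N) (validV (i, w)).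
Proof.
apply: (iffP forallP) => H s; first by move/implyP: (H s).
by apply/implyP; exact: H.
Qed.

Lemma Dedge_cover (b : 'I_7) : Dedge 0 b || Dedge 3 b.
Proof. by case: b => [[|[|[|[|[|[|[|b]]]]]]] hb]. Qed.

Lemma Dedge_out (a : 'I_7) : (a < 4)%N -> exists b : 'I_7, Dedge a b.
Proof.
case: a => [[|[|[|[|a]]]] ha] //= _.
- by exists ord0.
- by exists (Ordinal (isT : 2 < 7)).
- by exists (Ordinal (isT : 1 < 7)).
- by exists ord0.
Qed.

(* D is connected: a 2-colouring (P on outputs, Q on products) that agrees
   along every edge is constant. *)
Lemma Strassen_connected (P Q : 'I_7 -> bool) :
  (forall a b : 'I_7, (a < 4)%N -> Dedge a b -> P a = Q b) ->
  (forall a : 'I_7, (a < 4)%N -> P a = P ord0) /\ (forall b : 'I_7, Q b = P ord0).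
Proof.
move=> E; pose m3 : 'I_7 := Ordinal (isT : 3 < 7).
have hQ b : Q b = P ord0.
  have P30 : P m3 = P ord0 by rewrite (E m3 ord0) // -(E ord0 ord0).
  by case/orP: (Dedge_cover b) => hb; [rewrite -(E ord0 b) | rewrite -P30 -(E m3 b)].
split=> // a ha; have [b hb] := Dedge_out ha.
by rewrite (E a b) // hQ.
Qed.

Lemma card_lt4 : #|[set a : 'I_7 | (a < 4)%N]| = 4.
Proof. by rewrite -sum1dep_card big_mkcond !big_ord_recl big_ord0. Qed.

Lemma copy_balance (P Q : 'I_7 -> bool) :
  (forall a b : 'I_7, (a < 4)%N -> Dedge a b -> P a = Q b) ->
  7 * #|[set a : 'I_7 | (a < 4)%N && P a]| = 4 * #|[set b : 'I_7 | Q b]|.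
Proof.
case/Strassen_connected => hP hQ.
have eA c : P ord0 = c -> [set a : 'I_7 | (a < 4)%N && P a] = [set a : 'I_7 | (a < 4)%N && c].
  by move=> <-; apply/setP => a; rewrite !inE; case ha: (a < 4)%N => //; rewrite hP.
have eB c : P ord0 = c -> [set b : 'I_7 | Q b] = [set b : 'I_7 | c].
  by move=> <-; apply/setP => b; rewrite !inE hQ.
case c: (P ord0); rewrite (eA _ c) (eB _ c).
  rewrite (eq_card (B := [set a : 'I_7 | (a < 4)%N])) => [|a]; last by rewrite !inE andbT.
  by rewrite card_lt4 cardsT card_ord.
by rewrite !eq_card0 // => a; rewrite !inE ?andbF.
Qed.

Lemma copy_bound (P Q : 'I_7 -> bool) (m : bool) :
  (~~ m -> forall a b : 'I_7, (a < 4)%N -> Dedge a b -> P a = Q b) ->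
  let x := #|[set a : 'I_7 | (a < 4)%N && P a]| in let y := #|[set b : 'I_7 | Q b]| in
  7 * x <= 4 * y + 28 * m /\ 4 * y <= 7 * x + 28 * m.
Proof.
case: m => [_ | /(_ isT) /copy_balance E] /=; last by rewrite !muln0 !addn0 E.
have hx : #|[set a : 'I_7 | (a < 4)%N && P a]| <= #|[set a : 'I_7 | (a < 4)%N]|.
  by apply/subset_leq_card/subsetP => a; rewrite !inE => /andP [].
have hy : #|[set b : 'I_7 | Q b]| <= #|'I_7| by exact: max_card.
rewrite card_lt4 in hx; rewrite card_ord in hy.
rewrite muln1; split; apply: leq_trans (leq_addl _ _).
  exact: (leq_mul (leqnn 7) hx).
exact: (leq_mul (leqnn 4) hy).
Qed.

Section Layers.

Variable k : nat.
Implicit Types (t : 'I_k) (p : 'I_k) (g w : {ffun 'I_k -> 'I_7}) (a b : 'I_7).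

Definition setl w p a : {ffun 'I_k -> 'I_7} := [ffun s => if s == p then a else w s].

Lemma setlE w p a s : setl w p a s = if s == p then a else w s.
Proof. by rewrite ffunE. Qed.

Lemma setl_inj w p : injective (setl w p).
Proof. by move=> a b /ffunP /(_ p); rewrite !setlE eqxx. Qed.

Lemma setl_setl w p a b : setl (setl w p a) p b = setl w p b.
Proof. by apply/ffunP=> s; rewrite !setlE; case: eqP. Qed.

Lemma setl_id w p : setl w p (w p) = w.
Proof. by apply/ffunP=> s; rewrite setlE; case: eqP => // ->. Qed.

(* The layer t : 'I_k joins level lo t = l_{t+1} to level hi t = l_{t+2}
   (1-indexed as in the paper) through the letter at position pos t. *)
Definition lo t : 'I_k.+1 := widen_ord (leqnSn k) t.
Definition hi t : 'I_k.+1 := lift ord0 t.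
Definition pos t : 'I_k := rev_ord t.

Lemma lo_val t : lo t = t :> nat. Proof. by rewrite /lo. Qed.
Lemma hi_val t : hi t = t.+1 :> nat. Proof. exact: lift0. Qed.
Lemma pos_val t : pos t = k - t.+1 :> nat. Proof. by rewrite /pos. Qed.

Lemma valid_hi_setl t w a : validV (hi t, setl w (pos t) a) = validV (hi t, w).
Proof.
have free (s : 'I_k) : (s < k - hi t)%N -> s != pos t.
  by move=> hs; apply/eqP => e; move: hs; rewrite e hi_val pos_val; lia.
by apply/validP/validP => H s hs; move: (H s hs); rewrite setlE (negbTE (free s hs)).
Qed.

Lemma valid_lo t w : validV (lo t, w) = validV (hi t, w) && (w (pos t) < 4)%N.
Proof.
have ht := ltn_ord t.
apply/validP/andP => [H | [/validP H h4] s]; rewrite lo_val in H *.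
  split; last by apply: H; rewrite pos_val; lia.
  by apply/validP => s; rewrite hi_val => hs; apply: H; lia.
case: (ltnP s (k - t.+1)) => hs' hs; first by apply: H; rewrite hi_val.
by have -> : s = pos t by apply: ord_inj; rewrite pos_val; lia.
Qed.

Definition ctx t : {set {ffun 'I_k -> 'I_7}} :=
  [set g | validV (hi t, g) && (g (pos t) == ord0)].

Definition lowV t g a : DecT k := (lo t, setl g (pos t) a).
Definition highV t g b : DecT k := (hi t, setl g (pos t) b).

Lemma ctxP t g : reflect (validV (hi t, g) /\ g (pos t) = ord0) (g \in ctx t).
Proof. by rewrite inE; apply: (iffP andP) => -[-> /eqP ->]. Qed.

Lemma ctx_setl t w : validV (hi t, w) -> setl w (pos t) ord0 \in ctx t.
Proof. by move=> hw; apply/ctxP; rewrite valid_hi_setl setlE eqxx. Qed.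

Lemma valid_lowV t g a : g \in ctx t -> validV (lowV t g a) = (a < 4)%N.
Proof. by case/ctxP => hg _; rewrite /lowV valid_lo valid_hi_setl hg setlE eqxx. Qed.

Lemma valid_highV t g b : g \in ctx t -> validV (highV t g b).
Proof. by case/ctxP => hg _; rewrite /highV valid_hi_setl. Qed.

(* A level is fibred over a set C of contexts by erasing the letter at p,
   each fibre being indexed by the letters allowed by P. *)
Lemma card_level_fibres (A : {set DecT k}) (i : 'I_k.+1) p
    (C : {set {ffun 'I_k -> 'I_7}}) (P : pred 'I_7) :
  (forall g, g \in C -> g p = ord0) ->
  (forall g a, g \in C -> validV (i, setl g p a) = P a) ->
  (forall w, validV (i, w) -> setl w p ord0 \in C) ->
  #|A :&: level i| = \sum_(g in C) #|[set a | P a && ((i, setl g p a) \in A)]|.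
Proof.
move=> C0 CP Cw.
rewrite -sum1_card (partition_big (fun v : DecT k => setl v.2 p ord0) (mem C)) /=;
  last by move=> [j w]; rewrite !inE /= => /and3P [_ hw /eqP ej]; apply: Cw; rewrite -ej.
apply: eq_bigr => g hg; rewrite sum1dep_card.
have inj : injective (fun a => (i, setl g p a) : DecT k) by move=> a b [] /setl_inj.
rewrite -(card_imset _ inj); apply: eq_card => v; apply/idP/imsetP => [| [a ha ->]].
  case: v => j w; rewrite !inE /= => /andP [/and3P [vA hw /eqP ej] /eqP eg].
  subst j g; exists (w p); last by rewrite setl_setl setl_id.
  by rewrite inE -(CP _ _ hg) setl_setl setl_id hw vA.
move: ha; rewrite !inE /= => /andP [hP vA].
by rewrite vA CP // hP eqxx setl_setl -(C0 g hg) setl_id eqxx.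
Qed.

Lemma card_lo t (A : {set DecT k}) :
  #|A :&: level (lo t)| = \sum_(g in ctx t) #|[set a : 'I_7 | (a < 4)%N && (lowV t g a \in A)]|.
Proof.
apply: card_level_fibres => [g /ctxP [_ ->] // | g a hg | w]; first exact: valid_lowV.
by rewrite valid_lo => /andP [hw _]; exact: ctx_setl.
Qed.

Lemma card_hi t (A : {set DecT k}) :
  #|A :&: level (hi t)| = \sum_(g in ctx t) #|[set b : 'I_7 | highV t g b \in A]|.
Proof.
rewrite (@card_level_fibres A (hi t) (pos t) (ctx t) xpredT) => [|g /ctxP [_ ->] // | g b hg | w].
- by apply: eq_bigr => g _; apply: eq_card => b; rewrite !inE.
- exact: valid_highV.
- exact: ctx_setl.
Qed.

Lemma upEdge_copy t g a b : g \in ctx t -> (a < 4)%N -> Dedge a b ->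
  upEdge (lowV t g a) (highV t g b).
Proof.
move=> hg ha hab; have ht := ltn_ord t.
have ep (s : 'I_k) : (s == k - (lowV t g a).1 - 1 :> nat) = (s == pos t).
  by apply/eqP/eqP => [e | ->]; [apply: ord_inj; rewrite e | ]; rewrite pos_val lo_val; lia.
apply/and5P; split; rewrite ?valid_lowV ?valid_highV //.
  by apply/forallP => s; rewrite ep /= !setlE; case: (s == pos t); rewrite ?eqxx.
by apply/existsP; exists (pos t); rewrite ep /= !setlE eqxx.
Qed.

Definition mixed (S : {set DecT k}) t g : bool :=
  [exists a : 'I_7, exists b : 'I_7,
     [&& (a < 4)%N, Dedge a b & (lowV t g a \in S) != (highV t g b \in S)]].

Lemma unmixed_copy (S : {set DecT k}) t g : ~~ mixed S t g ->
  forall a b, (a < 4)%N -> Dedge a b -> (lowV t g a \in S) = (highV t g b \in S).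
Proof.
move=> /existsPn H a b ha hab; move/existsPn: (H a) => /(_ b).
by rewrite ha hab negbK => /eqP.
Qed.

Lemma layer_balance (S : {set DecT k}) t :
  let x := #|S :&: level (lo t)| in let y := #|S :&: level (hi t)| in
  let M := \sum_(g in ctx t) mixed S t g in
  7 * x <= 4 * y + 28 * M /\ 4 * y <= 7 * x + 28 * M.
Proof.
rewrite /= card_lo card_hi !big_distrr -!big_split /=.
by split; apply: leq_sum => g _; case: (copy_bound (@unmixed_copy S t g)).
Qed.

Lemma layer_sizes t : 4 * #|level (hi t)| = 7 * #|level (lo t)|.
Proof.
have := card_lo t setT; have := card_hi t setT; rewrite !setTI => -> ->.
rewrite !big_distrr; apply: eq_bigr => g _.
rewrite (eq_card (B := [set b : 'I_7 | true])) => [|b]; last by rewrite !inE.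
rewrite cardsT card_ord.
rewrite (eq_card (B := [set a : 'I_7 | (a < 4)%N])) => [|a]; last by rewrite !inE andbT.
by rewrite card_lt4.
Qed.

Definition cutEdges (A B : {set DecT k}) : {set DecT k * DecT k} :=
  [set e | [&& e.1 \in A, e.2 \in B & adj e.1 e.2]].

(* copyOf recovers the copy containing an edge from its upper endpoint. *)
Definition upper (u v : DecT k) : DecT k := if (u.1 < v.1)%N then v else u.

Lemma upper_lt (u v : DecT k) : (u.1 < v.1)%N -> upper u v = v /\ upper v u = v.
Proof. by rewrite /upper => lt; rewrite lt ltnNge ltnW. Qed.

Definition copyOf (e : DecT k * DecT k) : option ('I_k * {ffun 'I_k -> 'I_7}) :=
  let w := upper e.1 e.2 in
  omap (fun t => (t, setl w.2 (pos t) ord0)) (unlift ord0 w.1).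

Lemma copyOf_copy t g a b : g \in ctx t ->
  copyOf (lowV t g a, highV t g b) = Some (t, g) /\
  copyOf (highV t g b, lowV t g a) = Some (t, g).
Proof.
case/ctxP => _ g0.
have [up1 up2] := @upper_lt (lowV t g a) (highV t g b) (ltnSn t).
rewrite /copyOf up1 up2 -[(highV t g b).1]/(hi t) liftK /=.
by rewrite setl_setl -g0 setl_id.
Qed.

Lemma mixed_cut_edge (S : {set DecT k}) t g : g \in ctx t -> mixed S t g ->
  exists2 e, e \in cutEdges S (Vset k :\: S) & copyOf e = Some (t, g).
Proof.
move=> hg /existsP [a /existsP [b /and3P [ha hab]]].
have [c1 c2] := copyOf_copy a b hg.
have up := upEdge_copy hg ha hab.
have [vl vh] := (valid_lowV a hg, valid_highV b hg).
case hl: (lowV t g a \in S); case hh: (highV t g b \in S) => // _.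
  by exists (lowV t g a, highV t g b); rewrite // !inE /= hl hh vh /adj up.
by exists (highV t g b, lowV t g a); rewrite // !inE /= hl hh vl ha /adj up orbT.
Qed.

Lemma mixed_le_cut (S : {set DecT k}) :
  \sum_(t < k) \sum_(g in ctx t) mixed S t g <= cutE S (Vset k :\: S).
Proof.
pose Mix := [set c : 'I_k * {ffun 'I_k -> 'I_7} | (c.2 \in ctx c.1) && mixed S c.1 c.2].
have -> : \sum_(t < k) \sum_(g in ctx t) mixed S t g = #|Mix|.
  transitivity (\sum_(t < k) \sum_(g | (g \in ctx t) && mixed S t g) 1).
    by apply: eq_bigr => t _; rewrite big_mkcondr; apply: eq_bigr => g _; case: mixed.
  by rewrite pair_big_dep sum1dep_card.
rewrite -(card_imset _ (@Some_inj _)); apply: leq_trans (leq_imset_card copyOf _).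
apply/subset_leq_card/subsetP => _ /imsetP [[t g] /setIdP [hg hm] ->].
by have [e he ce] := mixed_cut_edge hg hm; apply/imsetP; exists e.
Qed.

Lemma card_by_levels (A : {set DecT k}) : A \subset Vset k ->
  #|A| = \sum_(t < k.+1) #|A :&: level (inord t)|.
Proof.
move=> /setIidPl {1}<-; rewrite -sum1_card (partition_big (fun v : DecT k => v.1) predT) //=.
apply: eq_bigr => i _; rewrite inord_val sum1dep_card; apply: eq_card => v.
by rewrite !inE andbA.
Qed.

Lemma card_Vset : #|Vset k| = \sum_(t < k.+1) #|level (inord t) : {set DecT k}|.
Proof.
rewrite card_by_levels //; apply: eq_bigr => t _; rewrite (setIidPr _) //.
by apply/subsetP => v; rewrite !inE => /andP [].
Qed.

(* Every level is nonempty (it contains the all-0 word). *)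
Lemma card_level_gt0 (i : 'I_k.+1) : 0 < #|level i|.
Proof.
apply/card_gt0P; exists (i, [ffun => ord0]).
by rewrite !inE eqxx andbT; apply/validP => s _; rewrite ffunE.
Qed.

Lemma inord_lo t : inord t = lo t.
Proof. by apply: ord_inj; rewrite lo_val inordK // ltnS ltnW. Qed.

Lemma inord_hi t : inord t.+1 = hi t.
Proof. by apply: ord_inj; rewrite hi_val inordK // ltnS. Qed.

End Layers.

Section LayeredDensity.
Variable R : realFieldType.
Local Open Scope ring_scope.

Lemma dist_le_variation (f : nat -> R) (K i j : nat) : (i <= K)%N -> (j <= K)%N ->
  `|f i - f j| <= \sum_(t < K) `|f t - f t.+1|.
Proof.
wlog lij : i j / (i <= j)%N.
  move=> H hi hj; case: (leqP i j) => [|/ltnW] hij; first exact: H.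
  by rewrite distrC; apply: H.
move=> _ hj.
pose F t := `|f t - f t.+1|.
have F0 m n : 0 <= \sum_(m <= t < n) F t by apply: sumr_ge0 => t _; exact: normr_ge0.
rewrite distrC -telescope_sumr //; apply: le_trans (ler_norm_sum _ _ _) _.
under eq_bigr => t _ do rewrite distrC.
rewrite -(big_mkord xpredT F) (big_cat_nat (leq0n i) (leq_trans lij hj)) /=.
rewrite (big_cat_nat lij hj) /=.
by have := F0 0%N i; have := F0 j K; lra.
Qed.

Lemma sum_gt0 (K : nat) (L : nat -> R) :
  (forall t, (t <= K)%N -> 0 < L t) -> 0 < \sum_(t < K.+1) L t.
Proof.
move=> Lp; apply: (lt_le_trans (Lp 0%N (leq0n K))); rewrite big_ord_recl lerDl.
by apply: sumr_ge0 => t _; exact: ltW (Lp _ (ltn_ord t)).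
Qed.

Lemma ratio_sum_dev (K : nat) (x L : nat -> R) (c B : R) :
  (forall t, (t <= K)%N -> 0 < L t) ->
  (forall t, (t <= K)%N -> `|x t / L t - c| <= B) ->
  `|(\sum_(t < K.+1) x t) / (\sum_(t < K.+1) L t) - c| <= B.
Proof.
move=> Lp dev.
have Lp' (t : 'I_K.+1) : 0 < L t := Lp t (ltn_ord t).
have V0 := sum_gt0 Lp.
have e : \sum_(t < K.+1) L t * (x t / L t - c) = \sum_(t < K.+1) x t - c * \sum_(t < K.+1) L t.
  rewrite mulr_sumr -sumrB; apply: eq_bigr => t _.
  by field; rewrite lt0r_neq0.
have -> : (\sum_(t < K.+1) x t) / (\sum_(t < K.+1) L t) - c =
          (\sum_(t < K.+1) L t * (x t / L t - c)) / \sum_(t < K.+1) L t.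
  by rewrite e; field; rewrite lt0r_neq0.
rewrite normf_div (gtr0_norm V0) ler_pdivrMr //.
apply: le_trans (ler_norm_sum _ _ _) _; rewrite mulr_sumr; apply: ler_sum => t _.
rewrite normrM (gtr0_norm (Lp' t)) mulrC; apply: ler_wpM2r; [exact: ltW | exact: dev (ltn_ord t)].
Qed.

Lemma geometric_weight (K : nat) :
  (\sum_(t < K.+1) (7/4 : R) ^+ t) * (4/7) ^+ K <= 7/3.
Proof.
elim: K => [|K IH]; first by rewrite big_ord1 !expr0 mulr1; lra.
have q : (7/4 : R) ^+ K.+1 * (4/7) ^+ K.+1 = 1.
  by rewrite -exprMn (_ : 7/4 * (4/7) = 1) ?expr1n //; lra.
rewrite big_ord_recr /= mulrDl q exprS mulrCA.
by move: IH; set G := _ * _; lra.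
Qed.

Lemma density_step (L0 Lt xt xt' M : R) : 0 < Lt -> L0 <= Lt ->
  `|7 * xt - 4 * xt'| <= 28 * M -> L0 * `|xt / Lt - xt' / (Lt * (7/4))| <= 4 * M.
Proof.
move=> Lp hL0 H.
have e : 7 * xt - 4 * xt' = (7 * Lt) * (xt / Lt - xt' / (Lt * (7/4))).
  by field; rewrite lt0r_neq0.
rewrite e normrM (gtr0_norm (x := 7 * Lt)) in H; last by rewrite mulr_gt0.
have := ler_wpM2r (normr_ge0 (xt / Lt - xt' / (Lt * (7/4)))) hL0.
by move: H; set a := `|_|; lra.
Qed.

(* The isoperimetric inequality for abstract level counts L_t, S-counts x_t and
   mixed-copy counts M_t satisfying the relations established above; the
   constant is 280/3 = 7/3 * 10 * 4. *)
Lemma layered_isoperimetry (K : nat) (L x : nat -> R) (M : 'I_K -> R) (cut : R) (i : nat) :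
  0 < L 0%N -> (forall t, 0 <= x t) ->
  (forall t : 'I_K, L t.+1 = L t * (7/4)) ->
  (forall t : 'I_K, `|7 * x t - 4 * x t.+1| <= 28 * M t) ->
  \sum_(t < K) M t <= cut -> (i <= K)%N ->
  let sigma := (\sum_(t < K.+1) x t) / (\sum_(t < K.+1) L t) in
  sigma / 10 <= `|sigma - x i / L i| ->
  (\sum_(t < K.+1) x t) * (4/7) ^+ K <= 280/3 * cut.
Proof.
move=> L0 x0 hL hx hM hi sigma hsig.
have Lgeo t : (t <= K)%N -> L t = L 0%N * (7/4) ^+ t.
  elim: t => [|t IH] ht; first by rewrite expr0 mulr1.
  by have ht' := ltnW ht; rewrite (hL (Ordinal ht)) IH // exprSr -mulrA.
have LgeL0 t : (t <= K)%N -> L 0%N <= L t.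
  by move=> ht; rewrite (Lgeo t ht) ler_pMr // exprn_ege1 //; lra.
have Lpos t : (t <= K)%N -> 0 < L t by move=> ht; exact: lt_le_trans L0 (LgeL0 t ht).
pose dens t := x t / L t.
pose U := \sum_(t < K) `|dens t - dens t.+1|.
have hU : L 0%N * U <= 4 * cut.
  apply: (@le_trans _ _ (\sum_(t < K) 4 * M t)); last by rewrite -mulr_sumr ler_wpM2l.
  rewrite mulr_sumr; apply: ler_sum => t _; have ht := ltnW (ltn_ord t).
  by rewrite /dens (hL t); apply: density_step (Lpos t ht) (LgeL0 t ht) (hx t).
have hdev : `|sigma - dens i| <= U.
  by apply: ratio_sum_dev => // t ht; exact: dist_le_variation.
have sig0 : 0 <= sigma.
  by apply: divr_ge0; apply: sumr_ge0 => t _; [exact: x0 | exact: ltW (Lpos t (ltn_ord t))].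
have hV : \sum_(t < K.+1) L t = L 0%N * \sum_(t < K.+1) (7/4 : R) ^+ t.
  by rewrite mulr_sumr; apply: eq_bigr => t _; exact: Lgeo t (ltn_ord t).
have hS : \sum_(t < K.+1) x t = sigma * L 0%N * \sum_(t < K.+1) (7/4 : R) ^+ t.
  by rewrite -mulrA -hV divfK // lt0r_neq0 // sum_gt0.
have sL : sigma * L 0%N <= 40 * cut.
  have : sigma <= 10 * U by lra.
  by move/(ler_wpM2r (ltW L0)); lra.
rewrite hS -mulrA; apply: le_trans (ler_wpM2l (mulr_ge0 sig0 (ltW L0)) (geometric_weight K)) _.
lra.
Qed.

End LayeredDensity.

Local Open Scope ring_scope.

Lemma nat_layer_dist (R : realFieldType) (x y m : nat) :
  (7 * x <= 4 * y + 28 * m)%N -> (4 * y <= 7 * x + 28 * m)%N ->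
  `|7 * (x%:R : R) - 4 * y%:R| <= 28 * m%:R.
Proof.
move=> h1 h2; rewrite -(ler_nat R) natrD !natrM in h1.
rewrite -(ler_nat R) natrD !natrM in h2.
by rewrite ler_norml; apply/andP; split; lra.
Qed.

(* The theorem, with c = 1/560, so that 6 c * 280/3 = 1. *)
Theorem mainTheorem7 :
  exists c : rat, 0 < c /\
  forall (k : nat) (S : {set DecT k}),
    (1 <= k)%N ->
    S \subset Vset k ->
    S != set0 ->
    let sigma : rat := #|S|%:R / #|Vset k|%:R in
    (exists i : 'I_k.+1,
        sigma / 10 <= `| sigma - #|S :&: level i|%:R / #|level i|%:R |) ->
    c * 6 * #|S|%:R * (4%:R / 7%:R) ^+ k <= (cutE S (Vset k :\: S))%:R.
Proof.
exists (1/560); split=> [|k S _ hSV _ sigma [i hi]]; first lra.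
pose x n : rat := #|S :&: level (inord n)|%:R.
pose L n : rat := #|level (inord n) : {set DecT k}|%:R.
pose M (t : 'I_k) : rat := (\sum_(g in ctx t) mixed S t g)%:R.
have hS : #|S|%:R = \sum_(t < k.+1) x t by rewrite card_by_levels // natr_sum.
have hV : #|Vset k|%:R = \sum_(t < k.+1) L t by rewrite card_Vset natr_sum.
have hL (t : 'I_k) : L t.+1 = L t * (7/4).
  have := congr1 (fun n => n%:R : rat) (layer_sizes t).
  by rewrite /L inord_lo inord_hi /= !natrM; lra.
have hx (t : 'I_k) : `|7 * x t - 4 * x t.+1| <= 28 * M t.
  by have [] := layer_balance S t; rewrite /x inord_lo inord_hi; exact: nat_layer_dist.
have hM : \sum_(t < k) M t <= (cutE S (Vset k :\: S))%:R.
  by rewrite -natr_sum ler_nat mixed_le_cut.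
rewrite /sigma hS hV -[i in #|_ :&: level i|]inord_val -[i in #|level i|]inord_val in hi.
have L0 : 0 < L 0%N by rewrite ltr0n card_level_gt0.
have := layered_isoperimetry L0 (fun t => ler0n _ _) hL hx hM (ltn_ord i) hi.
rewrite hS; move: (\sum_(t < k.+1) x t) (_ ^+ k) => A q.
by rewrite -(mulrA (1 / 560 * 6) A q); move: (A * q) => P; lra.
Qed.
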